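(* Suppose Assumptions 3.2, 4.2 and 4.3 hold. Then there exist constants $0<a_*<b_*<\infty$, a constant $l_0>0$, and a function $w_0\in C^1((0,\infty))$ such that $$\tfrac12\sigma^2(x)w_0'(x)+\mu(x)w_0(x)+h(x)=l_0,\quad x\in(a_*,b_* ),$$ $c_1\le w_0(x)\le c_2$ for $x\in(a_*,b_* )$; $w_0(x)=c_2$, $w_0'(x)=0$ for $x\le a_*$; and $w_0(x)=c_1$, $w_0'(x)=0$ for $x\ge b_*$.
   Context: Standing setup. $W$ is a standard one-dimensional Brownian motion. $\mu,\sigma:[0,\infty)\to\mathbb R$ are continuous with $\sigma(x)>0$ for $x>0$, such that the SDE $dX_0(s)=\mu(X_0(s))ds+\sigma(X_0(s))dW(s)$ has a weak solution unique in law with state space $[0,\infty)$, for which $0$ is an unattainable (entrance or natural) boundary point and $\infty$ is a natural boundary point. The scale and speed densities are $s(x)=\exp\{-\int_1^x \frac{2\mu(y)}{\sigma^2(y)}dy\}$ and $m(x)=\frac{1}{\sigma^2(x)s(x)}$ for $x>0$. The generator is $\mathcal Lf(x)=\frac12\sigma^2(x)f''(x)+\mu(x)f'(x)$. Fix constants $0<c_1<c_2$ and a nonnegative continuous function $h$ on $[0,\infty)$. A control is an adapted càdlàg process $\varphi=\xi-\eta$, where $\xi,\eta$ are nonnegative, nondecreasing, càdlàg, $\xi(0-)=\eta(0-)=0$, and the measures $d\xi,d\eta$ are mutually singular; it is admissible if the controlled equation $dX(s)=\mu(X(s))ds+\sigma(X(s))dW(s)+d\xi(s)-d\eta(s)$,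 $X(0-)=x\ge0$, has a unique nonnegative weak solution $X$. For $x\ge0$, $\mathscr A_x$ is the set of admissible controls with $\mathbb E_x[\xi(T)]\le K_1(x)T^n+K_2(x)$ for all $T>0$, where $K_1,K_2$ are fixed positive functions and $n\ge1$ a fixed integer. Define $V_r(x)=\sup_{\varphi\in\mathscr A_x}\mathbb E_x\big[\int_0^\infty e^{-rs}(h(X(s))ds+c_1d\eta(s)-c_2d\xi(s))\big]$ for $r>0$. Assumption 3.2: (i) $\lim_{x\downarrow0}[h(x)+c_2\mu(x)]\le0$ and $\lim_{x\to\infty}[h(x)+c_1\mu(x)]<0$; (ii) there exist $0<a<b<\infty$ with $\int_a^bh(y)m(y)dy+\frac{c_1}{2s(b)}-\frac{c_2}{2s(a)}>0$. Assumption 4.2: For each $r>0$ there exist $0<a_r<b_r<\infty$ such that $V_r\in C^2([0,\infty))$ and: for $x\in(a_r,b_r)$, $rV_r(x)-\mathcal LV_r(x)-h(x)=0$ and $c_1\le V_r'(x)\le c_2$; for $x\ge b_r$, $rV_r(x)-\mathcal LV_r(x)-h(x)\ge0$ and $V_r'(x)=c_1$; for $x\le a_r$, $rV_r(x)-\mathcal LV_r(x)-h(x)\ge0$ and $V_r'(x)=c_2$. Assumption 4.3: $h,\mu,\sigma$ are continuously differentiable and $\inf_{x\in[a,b]}\sigma^2(x)>0$ for every $[a,b]\subset(0,\infty)$. *)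

From Stdlib Require Import Reals.
From Coquelicot Require Import Coquelicot.
Open Scope R_scope.

Definition scale_dens (mu sigma : R -> R) (x : R) : R :=
  exp (- RInt (fun y => 2 * mu y / (sigma y ^ 2)) 1 x).

Definition speed_dens (mu sigma : R -> R) (x : R) : R :=
  / (sigma x ^ 2 * scale_dens mu sigma x).

Definition gen (mu sigma f : R -> R) (x : R) : R :=
  / 2 * sigma x ^ 2 * Derive_n f 2 x + mu x * Derive f x.

Definition diverges_at_0 (F : R -> R) : Prop :=
  forall M : R, exists e : R, 0 < e < 1 /\ RInt F e 1 > M.
Definition diverges_at_infty (F : R -> R) : Prop :=
  forall M : R, exists T : R, 1 < T /\ RInt F 1 T > M.

(* Feller's test: 0 is unattainable (entrance or natural). *)
Definition zero_unattainable (mu sigma : R -> R) : Prop :=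
  diverges_at_0 (fun y => scale_dens mu sigma y * RInt (speed_dens mu sigma) y 1).

(* Feller's test: +oo is a natural boundary. *)
Definition infty_natural (mu sigma : R -> R) : Prop :=
  diverges_at_infty (fun y => scale_dens mu sigma y * RInt (speed_dens mu sigma) 1 y) /\
  diverges_at_infty (fun y => speed_dens mu sigma y * RInt (scale_dens mu sigma) 1 y).

Definition C1_R (g : R -> R) : Prop :=
  (forall x, ex_derive g x) /\ (forall x, continuous (Derive g) x).
Definition C2_R (g : R -> R) : Prop :=
  (forall x, ex_derive g x) /\ (forall x, ex_derive (Derive g) x) /\
  (forall x, continuous (Derive_n g 2) x).

(* f is C^1 on [0,oo) (one-sided at 0): f agrees on [0,oo) with a C^1 function on R. *)
Definition C1_nonneg (f : R -> R) : Prop :=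
  exists g : R -> R, C1_R g /\ forall x, 0 <= x -> g x = f x.

Definition C1_pos (f : R -> R) : Prop :=
  forall x, 0 < x -> ex_derive f x /\ continuous (Derive f) x.

Definition standing_setup (mu sigma : R -> R) : Prop :=
  (forall x, 0 <= x -> continuous mu x) /\
  (forall x, 0 <= x -> continuous sigma x) /\
  (forall x, 0 < x -> 0 < sigma x) /\
  zero_unattainable mu sigma /\ infty_natural mu sigma.

Definition assumption_3_2 (mu sigma h : R -> R) (c1 c2 : R) : Prop :=
  (* (i) lim_{x->0+} [h + c2 mu] <= 0 (h, mu continuous at 0) *)
  h 0 + c2 * mu 0 <= 0 /\
  (exists L : Rbar, is_lim (fun x => h x + c1 * mu x) p_infty L /\ Rbar_lt L 0) /\
  (exists a b : R, 0 < a < b /\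
     RInt (fun y => h y * speed_dens mu sigma y) a b
       + c1 / (2 * scale_dens mu sigma b) - c2 / (2 * scale_dens mu sigma a) > 0).

(* V_r in C^2([0,oo)) is expressed via a C^2 function g on R agreeing with V_r on
   [0,oo); derivatives at points of [0,oo) are those of g (one-sided at 0). *)
Definition assumption_4_2 (mu sigma h : R -> R) (c1 c2 : R) (V : R -> R -> R) : Prop :=
  forall r : R, 0 < r ->
  exists ar br : R, exists g : R -> R,
    0 < ar < br /\ C2_R g /\ (forall x, 0 <= x -> g x = V r x) /\
    (forall x, ar < x < br ->
       r * g x - gen mu sigma g x - h x = 0 /\ c1 <= Derive g x <= c2) /\
    (forall x, br <= x ->
       r * g x - gen mu sigma g x - h x >= 0 /\ Derive g x = c1) /\
    (forall x, 0 <= x <= ar ->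
       r * g x - gen mu sigma g x - h x >= 0 /\ Derive g x = c2).

Definition assumption_4_3 (mu sigma h : R -> R) : Prop :=
  C1_nonneg h /\ C1_nonneg mu /\ C1_nonneg sigma /\
  forall a b : R, 0 < a < b ->
    exists d : R, 0 < d /\ forall x, a <= x <= b -> d <= sigma x ^ 2.

From Stdlib Require Import Reals Lra Psatz ClassicalEpsilon Classical.
From Coquelicot Require Import Coquelicot.
Open Scope R_scope.

(* With s the scale density, m the speed density, and H, M primitives of h m and m,
   the band functional
     Psi l a b = H b - H a - l (M b - M a) + (c1 / s(b) - c2 / s(a)) / 2
   measures the net value of the band [a, b] relative to a long-run level l.
   Assumption 3.2(ii) gives a band of positive value at level 0, hence of value 0
   at some level l1 > 0.  On a large triangle al <= a <= b <= be the maximum of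
   Psi l is attained for each l and is nonincreasing and continuous in l, so it
   vanishes at the largest level lstar where it is nonnegative (zero_level_of_max).
   Assumption 3.2(i) forces a maximising band (a_star, b_star) into the interior,
   where the first-order conditions read h + c2 mu = lstar at a_star and
   h + c1 mu = lstar at b_star.  The profile w = c1 - 2 s Psi lstar a_star (.)
   solves sigma^2 / 2 w' + mu w + h = lstar, equals c2 at a_star and c1 at b_star,
   stays in [c1, c2] by maximality, and has zero derivative at both ends; its
   constant extension is the required w0. *)

(* Continuity of pointwise operations on real functions, stated for R -> R so that
   they apply without unification hints on Coquelicot's generic structures. *)
Lemma continuous_Rplus (f g : R -> R) (x : R) :
  continuous f x -> continuous g x -> continuous (fun t => f t + g t) x.
Proof. intros Hf Hg. apply (continuous_plus f g); assumption. Qed.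

Lemma continuous_Rminus (f g : R -> R) (x : R) :
  continuous f x -> continuous g x -> continuous (fun t => f t - g t) x.
Proof. intros Hf Hg. apply (continuous_minus f g); assumption. Qed.

Lemma continuous_Rmult (f g : R -> R) (x : R) :
  continuous f x -> continuous g x -> continuous (fun t => f t * g t) x.
Proof. intros Hf Hg. apply (continuous_mult f g); assumption. Qed.

Lemma continuous_Rconst (c x : R) : continuous (fun _ : R => c) x.
Proof. apply continuous_const. Qed.

Lemma continuous_Rdiv (f g : R -> R) (x : R) :
  continuous f x -> continuous g x -> g x <> 0 -> continuous (fun t => f t / g t) x.
Proof.
  intros Hf Hg Hg0. apply continuous_Rmult; [exact Hf|].
  apply continuous_Rinv_comp; assumption.
Qed.

Lemma continuous_Rsqr (f : R -> R) (x : R) :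
  continuous f x -> continuous (fun t => f t ^ 2) x.
Proof.
  intros Hf. apply (continuous_ext (fun t => f t * f t)); [intros t; simpl; ring|].
  apply continuous_Rmult; assumption.
Qed.

Lemma is_derive_affine3 (F G K : R -> R) (x dF dG dK p q r s : R) :
  is_derive F x dF -> is_derive G x dG -> is_derive K x dK ->
  is_derive (fun t => p * F t + q * G t + r * K t + s) x (p * dF + q * dG + r * dK).
Proof.
  intros HF HG HK. rewrite <- (Rplus_0_r (p * dF + q * dG + r * dK)).
  apply (is_derive_plus (fun t => p * F t + q * G t + r * K t) (fun _ => s));
    [|exact (is_derive_const s x)].
  apply (is_derive_plus (fun t => p * F t + q * G t) (fun t => r * K t));
    [|apply is_derive_scal, HK].
  apply (is_derive_plus (fun t => p * F t) (fun t => q * G t));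
    apply is_derive_scal; assumption.
Qed.

Lemma lt_of_pos_derive (F F' : R -> R) (u v : R) :
  u < v -> (forall t, u <= t <= v -> is_derive F t (F' t)) ->
  (forall t, u < t < v -> 0 < F' t) -> F u < F v.
Proof.
  intros Huv HF Hpos.
  destruct (MVT_cor2 F F' u v Huv) as [c [Hc Hcuv]].
  - intros c Hc. apply is_derive_Reals, HF, Hc.
  - specialize (Hpos c Hcuv). nra.
Qed.

Lemma gt_of_neg_derive (F F' : R -> R) (u v : R) :
  u < v -> (forall t, u <= t <= v -> is_derive F t (F' t)) ->
  (forall t, u < t < v -> F' t < 0) -> F v < F u.
Proof.
  intros Huv HF Hneg.
  destruct (MVT_cor2 F F' u v Huv) as [c [Hc Hcuv]].
  - intros c Hc. apply is_derive_Reals, HF, Hc.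
  - specialize (Hneg c Hcuv). nra.
Qed.

Lemma le_of_nonpos_derive (F F' : R -> R) (u v : R) :
  u <= v -> (forall t, u <= t <= v -> is_derive F t (F' t)) ->
  (forall t, u < t < v -> F' t <= 0) -> F v <= F u.
Proof.
  intros Huv HF Hneg. destruct (Req_dec u v) as [<-|Hne]; [lra|].
  destruct (MVT_cor2 F F' u v) as [c [Hc Hcuv]]; [lra| |].
  - intros c Hc. apply is_derive_Reals, HF, Hc.
  - specialize (Hneg c Hcuv). nra.
Qed.

Lemma derive_zero_at_max (F : R -> R) (a b c dF : R) :
  a < c -> c < b -> is_derive F c dF ->
  (forall x, a < x -> x < b -> F x <= F c) -> dF = 0.
Proof.
  intros Hac Hcb HF Hmax.
  assert (pr : derivable_pt F c) by (exists dF; apply is_derive_Reals, HF).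
  rewrite <- (deriv_maximum F a b c pr Hac Hcb Hmax).
  symmetry. apply derive_pt_eq_0, is_derive_Reals, HF.
Qed.

Lemma const_of_zero_derive (F : R -> R) (u v : R) :
  u <= v -> (forall t, u <= t <= v -> is_derive F t 0) -> F u = F v.
Proof.
  intros Huv HF. destruct (Req_dec u v) as [<-|Hne]; [reflexivity|].
  apply eq_is_derive; [exact HF | lra].
Qed.

Lemma ex_RInt_pos (g : R -> R) (u v : R) :
  0 < u -> 0 < v -> (forall y, 0 < y -> continuous g y) -> ex_RInt g u v.
Proof.
  intros Hu Hv Hg. apply (@ex_RInt_continuous R_CompleteNormedModule).
  intros z Hz. apply Hg. assert (0 < Rmin u v) by (apply Rmin_glb_lt; lra). lra.
Qed.

Lemma is_derive_RInt_from_1 (g : R -> R) (x : R) :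
  0 < x -> (forall y, 0 < y -> continuous g y) ->
  is_derive (fun z => RInt g 1 z) x (g x).
Proof.
  intros Hx Hg. apply is_derive_RInt with (a := 1); [|apply Hg, Hx].
  assert (Hx2 : 0 < x / 2) by lra. exists (mkposreal _ Hx2). intros y Hy.
  change (Rabs (y - x) < x / 2) in Hy. apply Rabs_def2 in Hy.
  apply (@RInt_correct R_CompleteNormedModule), ex_RInt_pos; [lra | lra | exact Hg].
Qed.

Definition clamp (a b t : R) : R := Rmax a (Rmin b t).

Lemma clamp_id (a b t : R) : a <= t <= b -> clamp a b t = t.
Proof. intros Ht. unfold clamp, Rmax, Rmin. repeat destruct Rle_dec; lra. Qed.

Lemma clamp_below (a b t : R) : a <= b -> t <= a -> clamp a b t = a.
Proof. intros Hab Ht. unfold clamp, Rmax, Rmin. repeat destruct Rle_dec; lra. Qed.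

Lemma clamp_above (a b t : R) : a <= b -> b <= t -> clamp a b t = b.
Proof. intros Hab Ht. unfold clamp, Rmax, Rmin. repeat destruct Rle_dec; lra. Qed.

Lemma clamp_range (a b t : R) : a <= b -> a <= clamp a b t <= b.
Proof. intros Hab. unfold clamp, Rmax, Rmin. repeat destruct Rle_dec; lra. Qed.

Lemma clamp_continuous (a b t : R) : a <= b -> continuous (clamp a b) t.
Proof.
  intros Hab. apply continuity_pt_filterlim, continuity_pt_locally. intros eps.
  exists eps. intros s Hs. change (Rabs (s - t) < eps) in Hs.
  change (Rabs (clamp a b s - clamp a b t) < eps).
  apply Rabs_def2 in Hs. apply Rabs_def1;
  unfold clamp, Rmax, Rmin; repeat destruct Rle_dec; lra.
Qed.

(* The extension
   is the primitive of the clamped derivative W' o clamp a b. *)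
Lemma C1_constant_extension (W W' : R -> R) (a b : R) :
  a <= b ->
  (forall x, a <= x <= b -> is_derive W x (W' x) /\ continuous W' x) ->
  W' a = 0 -> W' b = 0 ->
  exists w : R -> R,
    (forall x, ex_derive w x /\ continuous (Derive w) x) /\
    (forall x, a <= x <= b -> w x = W x /\ Derive w x = W' x) /\
    (forall x, x <= a -> w x = W a /\ Derive w x = 0) /\
    (forall x, b <= x -> w x = W b /\ Derive w x = 0).
Proof.
  intros Hab HW Ha Hb.
  set (k := fun x => W' (clamp a b x)).
  assert (k_cont : forall x, continuous k x).
  { intros x. apply (continuous_comp (clamp a b) W'); [apply clamp_continuous, Hab|].
    apply HW, clamp_range, Hab. }
  assert (k_in : forall x, a <= x <= b -> k x = W' x)
    by (intros x Hx; unfold k; rewrite clamp_id; auto).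
  assert (k_left : forall x, x <= a -> k x = 0)
    by (intros x Hx; unfold k; rewrite clamp_below; auto).
  assert (k_right : forall x, b <= x -> k x = 0)
    by (intros x Hx; unfold k; rewrite clamp_above; auto).
  set (w := fun x => W a + RInt k a x).
  assert (w_derive : forall x, is_derive w x (k x)).
  { intros x. rewrite <- (Rplus_0_l (k x)).
    apply (is_derive_plus (fun _ => W a) (fun y => RInt k a y)).
    - exact (is_derive_const (W a) x).
    - apply is_derive_RInt with (a := a); [|apply k_cont].
      apply filter_forall. intros y.
      apply (@RInt_correct R_CompleteNormedModule), (@ex_RInt_continuous R_CompleteNormedModule).
      intros z _. apply k_cont. }
  assert (Dw : forall x, Derive w x = k x) by (intros x; apply is_derive_unique, w_derive).
  assert (w_a : w a = W a) by (unfold w; rewrite RInt_point; apply Rplus_0_r).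
  assert (w_W : forall x, a <= x <= b -> w x = W x).
  { intros x Hx.
    assert (Hc : w a - W a = w x - W x).
    { apply (const_of_zero_derive (fun t => w t - W t)); [lra|].
      intros t Ht. replace 0 with (k t - W' t) by (rewrite k_in; lra).
      apply (is_derive_minus w W); [apply w_derive | apply HW; lra]. }
    lra. }
  exists w. split; [|split; [|split]].
  - intros x. split; [exists (k x); apply w_derive|].
    apply (continuous_ext k); [intros y; symmetry; apply Dw | apply k_cont].
  - intros x Hx. rewrite Dw. split; [apply w_W | apply k_in]; exact Hx.
  - intros x Hx. rewrite Dw, k_left by exact Hx. split; [|reflexivity].
    rewrite <- w_a. apply (const_of_zero_derive w x a Hx).
    intros t Ht. rewrite <- (k_left t) by lra. apply w_derive.
  - intros x Hx. rewrite Dw, k_right by exact Hx. split; [|reflexivity].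
    rewrite <- (w_W b) by lra. symmetry. apply (const_of_zero_derive w b x Hx).
    intros t Ht. rewrite <- (k_right t) by lra. apply w_derive.
Qed.

Lemma below_near_zero (g : R -> R) (l a0 : R) :
  continuous g 0 -> g 0 < l -> 0 < a0 ->
  exists al0, 0 < al0 < a0 /\ forall x, 0 <= x <= al0 -> g x < l.
Proof.
  intros Hg Hl Ha0. assert (Heps : 0 < l - g 0) by lra.
  destruct (proj1 (continuity_pt_locally g 0) (proj2 (continuity_pt_filterlim g 0) Hg)
              (mkposreal _ Heps)) as [d Hd].
  assert (Hd0 := cond_pos d).
  exists (Rmin (d / 2) (a0 / 2)). split.
  - split; [apply Rmin_glb_lt; lra|]. apply (Rle_lt_trans _ (a0 / 2)); [apply Rmin_r | lra].
  - intros x Hx. assert (Rmin (d / 2) (a0 / 2) <= d / 2) by apply Rmin_l.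
    assert (Hball : Rabs (x - 0) < d) by (apply Rabs_def1; lra).
    specialize (Hd x Hball). simpl in Hd. apply Rabs_def2 in Hd. lra.
Qed.

Lemma eventually_negative (g : R -> R) (L : Rbar) (b0 : R) :
  is_lim g p_infty L -> Rbar_lt L 0 ->
  exists be0, b0 < be0 /\ forall x, be0 <= x -> g x < 0.
Proof.
  intros Hlim HL.
  assert (Hneg : Rbar_locally L (fun y => y < 0)).
  { destruct L as [l| |]; simpl in HL |- *; [|contradiction|exists 0; intros; lra].
    assert (Hl : 0 < - l) by lra. exists (mkposreal _ Hl). intros y Hy.
    change (Rabs (y - l) < - l) in Hy. apply Rabs_def2 in Hy. lra. }
  destruct (Hlim _ Hneg) as [N HN].
  exists (Rmax (N + 1) (b0 + 1)).
  split; [apply (Rlt_le_trans _ (b0 + 1)); [lra | apply Rmax_r]|].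
  intros x Hx. apply HN. assert (N + 1 <= Rmax (N + 1) (b0 + 1)) by apply Rmax_l. lra.
Qed.

Definition triangle (al be a b : R) : Prop := al <= a /\ a <= b /\ b <= be.

(* The running maximum b |-> max of g on [al, max al b] is continuous when g is
   continuous on [al, oo); it is used to maximise separable functions on a triangle. *)
Lemma running_max_continuous (g : R -> R) (al : R) :
  (forall x, al <= x -> continuity_pt g x) ->
  exists G : R -> R, (forall b, continuity_pt G b) /\
    (forall b, exists a, al <= a <= Rmax al b /\ G b = g a) /\
    (forall a b, al <= a <= Rmax al b -> g a <= G b).
Proof.
  intros Hg.
  assert (Hex : forall b, exists t,
             al <= t <= Rmax al b /\ forall u, al <= u <= Rmax al b -> g u <= g t).
  { intros b. destruct (continuity_ab_maj g al (Rmax al b)) as [t [Hmax Ht]].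
    - apply Rmax_l.
    - intros c Hc. apply Hg. lra.
    - exists t. auto. }
  destruct (choice _ Hex) as [tm Htm].
  exists (fun b => g (tm b)). split; [|split].
  2: { intros b. exists (tm b). split; [apply Htm | reflexivity]. }
  2: { intros a b Ha. apply Htm, Ha. }
  intros b0. apply continuity_pt_locally. intros eps.
  set (c0 := Rmax al b0).
  assert (Heps2 : 0 < eps / 2) by (destruct eps; simpl; lra).
  destruct (proj1 (continuity_pt_locally g c0) (Hg c0 (Rmax_l al b0)) (mkposreal _ Heps2))
    as [d Hd].
  assert (Hnear : forall u, Rabs (u - c0) < d -> Rabs (g u - g c0) < eps / 2)
    by (intros u Hu; apply (Hd u), Hu).
  assert (Hcmp : forall b b', Rabs (Rmax al b - c0) < d -> Rabs (Rmax al b' - c0) < d ->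
                   g (tm b') < g (tm b) + eps).
  { intros b b' Hb Hb'. destruct (Htm b) as [Hrange Hmax]. destruct (Htm b') as [Hrange' _].
    destruct (Rle_dec (tm b') (Rmax al b)) as [Hin|Hout].
    - assert (g (tm b') <= g (tm b)) by (apply Hmax; lra). destruct eps; simpl in *; lra.
    - assert (Htm' : Rabs (tm b' - c0) < d).
      { apply Rabs_def2 in Hb. apply Rabs_def2 in Hb'. apply Rabs_def1; lra. }
      apply Hnear, Rabs_def2 in Htm'. apply Hnear, Rabs_def2 in Hb.
      assert (g (Rmax al b) <= g (tm b)) by (apply Hmax; split; [apply Rmax_l | lra]).
      lra. }
  exists d. intros b Hb. change (Rabs (b - b0) < d) in Hb.
  assert (Hclose : Rabs (Rmax al b - c0) < d).
  { unfold c0. apply Rabs_def2 in Hb. apply Rabs_def1; unfold Rmax; repeat destruct Rle_dec; lra. }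
  assert (Hc0 : Rabs (Rmax al b0 - c0) < d)
    by (unfold c0; rewrite Rminus_diag, Rabs_R0; apply cond_pos).
  change (Rabs (g (tm b) - g (tm b0)) < eps). apply Rabs_def1.
  - apply (Rplus_lt_reg_r (g (tm b0))). ring_simplify. apply Hcmp; assumption.
  - pose proof (Hcmp b b0 Hclose Hc0). lra.
Qed.

Lemma max_on_triangle (P g : R -> R) (al be : R) :
  al <= be -> (forall x, al <= x -> continuity_pt g x) ->
  (forall x, al <= x <= be -> continuity_pt P x) ->
  exists a b, triangle al be a b /\
    forall a' b', triangle al be a' b' -> P b' + g a' <= P b + g a.
Proof.
  intros Hbe Hg HP.
  destruct (running_max_continuous g al Hg) as [G [HGcont [HGatt HGmax]]].
  destruct (continuity_ab_maj (fun b => P b + G b) al be Hbe) as [b [Hbmax Hb]].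
  { intros c Hc. apply continuity_pt_plus; auto. }
  destruct (HGatt b) as [a [Ha HGa]]. rewrite Rmax_right in Ha by lra.
  exists a, b. split; [unfold triangle; lra|].
  intros a' b' [Ha' [Hab' Hb']].
  specialize (Hbmax b' (conj (Rle_trans _ _ _ Ha' Hab') Hb')). cbv beta in Hbmax.
  assert (g a' <= G b') by (apply HGmax; rewrite Rmax_right; lra).
  lra.
Qed.

(* Suppose Psi l p = Psi l' p - (l - l') D p with
   0 <= D <= Dm on T, so that l |-> max_T Psi l is nonincreasing and continuous. *)
Lemma zero_level_of_max {A : Type} (Psi : R -> A -> R) (D : A -> R) (T : A -> Prop)
    (Dm l1 L0 : R) (p1 : A) :
  (forall l l' p, Psi l p = Psi l' p - (l - l') * D p) ->
  (forall p, T p -> 0 <= D p <= Dm) ->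
  T p1 -> 0 <= Psi l1 p1 ->
  (forall p, T p -> Psi L0 p < 0) ->
  (forall l, exists p, T p /\ forall q, T q -> Psi l q <= Psi l p) ->
  exists l p, l1 <= l /\ T p /\ Psi l p = 0 /\ forall q, T q -> Psi l q <= 0.
Proof.
  intros Hshift HD Tp1 Hl1 HL0 Hattained.
  set (S := fun l => exists p, T p /\ 0 <= Psi l p).
  assert (S_bound : forall l, S l -> l <= L0).
  { intros l [p [Tp Hp]]. apply Rnot_lt_le. intros Hlt.
    specialize (HL0 p Tp). rewrite (Hshift l L0) in Hp. destruct (HD p Tp). nra. }
  destruct (completeness S) as [lstar [Hub Hlub]].
  { exists L0. intros l Hl. apply S_bound, Hl. }
  { exists l1, p1. auto. }
  destruct (Hattained lstar) as [p [Tp Hp]].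
  set (G := Psi lstar p).
  (* If G > 0, the level lstar + G / (D p + 1) would still belong to S. *)
  assert (HG_le : G <= 0).
  { apply Rnot_lt_le. intros HGpos. destruct (HD p Tp) as [HD0 _].
    set (l' := lstar + G / (D p + 1)).
    assert (Sl' : S l').
    { exists p. split; [exact Tp|]. rewrite (Hshift l' lstar). fold G.
      replace (G - (l' - lstar) * D p) with (G / (D p + 1)) by (unfold l'; field; lra).
      apply Rlt_le, Rdiv_lt_0_compat; lra. }
    pose proof (Hub l' Sl').
    assert (0 < G / (D p + 1)) by (apply Rdiv_lt_0_compat; lra). unfold l' in *. lra. }
  (* If G < 0, a level of S slightly below lstar contradicts maximality at p. *)
  assert (HG_ge : 0 <= G).
  { apply Rnot_lt_le. intros HGneg. destruct (HD p1 Tp1) as [HDm0 HDm].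
    set (delta := - G / (Dm + 1)).
    assert (Hdelta : delta * (Dm + 1) = - G) by (unfold delta; field; lra).
    assert (Hdelta_pos : 0 < delta) by (unfold delta; apply Rdiv_lt_0_compat; lra).
    assert (exists l, S l /\ lstar - delta < l) as [l [[q [Tq Hq]] Hl]].
    { apply NNPP. intros Hnone.
      assert (lstar <= lstar - delta); [|lra].
      apply Hlub. intros l Sl. apply Rnot_lt_le. intros Hlt. apply Hnone. eauto. }
    specialize (Hp q Tq). rewrite (Hshift lstar l) in Hp. fold G in Hp.
    destruct (HD q Tq) as [HDq0 HDq].
    destruct (Rle_dec lstar l) as [Hbelow|Habove]; [nra|].
    assert ((lstar - l) * D q <= delta * Dm) by (apply Rmult_le_compat; lra).
    lra. }
  exists lstar, p. repeat split; auto.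
  - apply Hub. exists p1. auto.
  - fold G. lra.
  - intros q Tq. specialize (Hp q Tq). fold G in Hp. lra.
Qed.

Section BandFunctional.

(* The diffusion coefficients and the reward rate are continuous on (0, oo), where
   sigma is positive; the prices are c1 (selling) and c2 (buying). *)
Variables (mu sigma h : R -> R) (c1 c2 : R).
Hypothesis mu_cont : forall x, 0 < x -> continuous mu x.
Hypothesis sigma_cont : forall x, 0 < x -> continuous sigma x.
Hypothesis h_cont : forall x, 0 < x -> continuous h x.
Hypothesis sigma_pos : forall x, 0 < x -> 0 < sigma x.

Lemma sigma2_pos (x : R) : 0 < x -> 0 < sigma x ^ 2.
Proof. intros Hx. apply pow_lt, sigma_pos, Hx. Qed.

Lemma sigma2_cont (x : R) : 0 < x -> continuous (fun t => sigma t ^ 2) x.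
Proof. intros Hx. apply continuous_Rsqr, sigma_cont, Hx. Qed.

Definition drift_ratio (x : R) : R := 2 * mu x / sigma x ^ 2.

Definition inv_scale (x : R) : R := exp (RInt drift_ratio 1 x).

Let m := speed_dens mu sigma.

Lemma inv_scale_pos (x : R) : 0 < inv_scale x.
Proof. apply exp_pos. Qed.

Lemma scale_dens_inv (x : R) : scale_dens mu sigma x = / inv_scale x.
Proof. unfold scale_dens, inv_scale, drift_ratio. apply exp_Ropp. Qed.

Lemma speed_dens_eq (x : R) : m x = inv_scale x / sigma x ^ 2.
Proof.
  unfold m, speed_dens. rewrite scale_dens_inv, Rinv_mult, Rinv_inv.
  unfold Rdiv. apply Rmult_comm.
Qed.

Lemma speed_dens_pos (x : R) : 0 < x -> 0 < m x.
Proof.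
  intros Hx. rewrite speed_dens_eq.
  apply Rdiv_lt_0_compat; [apply inv_scale_pos | apply sigma2_pos, Hx].
Qed.

(* (1 / s)' = (2 mu / sigma^2) / s = 2 mu m. *)
Lemma inv_scale_derive (x : R) : 0 < x -> is_derive inv_scale x (2 * mu x * m x).
Proof.
  intros Hx.
  assert (Hratio : forall y, 0 < y -> continuous drift_ratio y).
  { intros y Hy. apply continuous_Rdiv; [|apply sigma2_cont, Hy | apply Rgt_not_eq, sigma2_pos, Hy].
    apply continuous_Rmult; [apply continuous_Rconst | apply mu_cont, Hy]. }
  replace (2 * mu x * m x) with (drift_ratio x * inv_scale x).
  - apply (is_derive_comp exp (fun z => RInt drift_ratio 1 z)); [apply is_derive_exp|].
    apply is_derive_RInt_from_1; assumption.
  - rewrite speed_dens_eq. unfold drift_ratio. field. apply Rgt_not_eq, sigma_pos, Hx.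
Qed.

Lemma speed_dens_cont (x : R) : 0 < x -> continuous m x.
Proof.
  intros Hx. apply (continuous_ext (fun t => inv_scale t / sigma t ^ 2)).
  { intros t. symmetry. apply speed_dens_eq. }
  apply continuous_Rdiv; [|apply sigma2_cont, Hx | apply Rgt_not_eq, sigma2_pos, Hx].
  apply (ex_derive_continuous inv_scale). exists (2 * mu x * m x). apply inv_scale_derive, Hx.
Qed.

Lemma reward_dens_cont (x : R) : 0 < x -> continuous (fun y => h y * m y) x.
Proof. intros Hx. apply continuous_Rmult; [apply h_cont | apply speed_dens_cont]; exact Hx. Qed.

Definition cum_speed (x : R) : R := RInt m 1 x.
Definition cum_reward (x : R) : R := RInt (fun y => h y * m y) 1 x.

Lemma cum_speed_derive (x : R) : 0 < x -> is_derive cum_speed x (m x).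
Proof. intros Hx. apply is_derive_RInt_from_1; [exact Hx | apply speed_dens_cont]. Qed.

Lemma cum_reward_derive (x : R) : 0 < x -> is_derive cum_reward x (h x * m x).
Proof.
  intros Hx. apply (is_derive_RInt_from_1 (fun y => h y * m y));
    [exact Hx | apply reward_dens_cont].
Qed.

Lemma cum_speed_mono (a b : R) : 0 < a -> a <= b -> cum_speed a <= cum_speed b.
Proof.
  intros Ha Hab. destruct (Req_dec a b) as [<-|Hne]; [lra|].
  apply Rlt_le, (lt_of_pos_derive cum_speed m); [lra| |].
  - intros t Ht. apply cum_speed_derive. lra.
  - intros t Ht. apply speed_dens_pos. lra.
Qed.

(* The band functional: for the band [a, b] (buy at a for c2, sell at b for c1) and a
   candidate long-run level l,
     Psi l a b = int_a^b (h - l) m + (c1 / s(b) - c2 / s(a)) / 2.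
   The optimal band and level are characterised by Psi l a b = 0 with Psi l <= 0
   on all bands. *)
Definition band_value (l a b : R) : R :=
  cum_reward b - cum_reward a - l * (cum_speed b - cum_speed a)
  + (c1 * inv_scale b - c2 * inv_scale a) / 2.

Lemma band_value_shift (l l' a b : R) :
  band_value l a b = band_value l' a b - (l - l') * (cum_speed b - cum_speed a).
Proof. unfold band_value. ring. Qed.

Lemma band_value_diag (l a : R) : band_value l a a = (c1 - c2) * inv_scale a / 2.
Proof. unfold band_value. field. Qed.

Lemma band_value_split (l a t b : R) :
  band_value l t b = band_value l a b - band_value l a t + (c1 - c2) * inv_scale t / 2.
Proof. unfold band_value. field. Qed.

Lemma band_value_derive_left (l a b : R) : 0 < a ->
  is_derive (fun t => band_value l t b) a (m a * (l - h a - c2 * mu a)).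
Proof.
  intros Ha.
  apply (is_derive_ext (fun t => (-1) * cum_reward t + l * cum_speed t + (- c2 / 2) * inv_scale t
                                 + (cum_reward b - l * cum_speed b + c1 * inv_scale b / 2))).
  { intros t. unfold band_value. lra. }
  replace (m a * (l - h a - c2 * mu a))
    with ((-1) * (h a * m a) + l * m a + (- c2 / 2) * (2 * mu a * m a)) by field.
  apply is_derive_affine3;
    [apply cum_reward_derive | apply cum_speed_derive | apply inv_scale_derive]; exact Ha.
Qed.

Lemma band_value_derive_right (l a b : R) : 0 < b ->
  is_derive (fun t => band_value l a t) b (m b * (h b + c1 * mu b - l)).
Proof.
  intros Hb.
  apply (is_derive_ext (fun t => 1 * cum_reward t + (- l) * cum_speed t + (c1 / 2) * inv_scale t
                                 + (- cum_reward a + l * cum_speed a - c2 * inv_scale a / 2))).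
  { intros t. unfold band_value. lra. }
  replace (m b * (h b + c1 * mu b - l))
    with (1 * (h b * m b) + (- l) * m b + (c1 / 2) * (2 * mu b * m b)) by field.
  apply is_derive_affine3;
    [apply cum_reward_derive | apply cum_speed_derive | apply inv_scale_derive]; exact Hb.
Qed.

Lemma band_value_level0 (a b : R) : 0 < a -> 0 < b ->
  RInt (fun y => h y * m y) a b + c1 / (2 * scale_dens mu sigma b)
    - c2 / (2 * scale_dens mu sigma a) = band_value 0 a b.
Proof.
  intros Ha Hb.
  assert (Hint : forall u v, 0 < u -> 0 < v -> ex_RInt (fun y => h y * m y) u v)
    by (intros u v Hu Hv; apply ex_RInt_pos; [exact Hu | exact Hv | apply reward_dens_cont]).
  assert (Hchasles : RInt (fun y => h y * m y) a b = cum_reward b - cum_reward a).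
  { unfold cum_reward. rewrite <- (RInt_Chasles (fun y => h y * m y) 1 a b);
      [|apply Hint; lra | apply Hint; lra].
    change (plus ?x ?y) with (x + y). lra. }
  rewrite Hchasles, !scale_dens_inv. unfold band_value.
  assert (0 < inv_scale a) by apply inv_scale_pos.
  assert (0 < inv_scale b) by apply inv_scale_pos.
  field. lra.
Qed.

Lemma band_level_positive (a b : R) : 0 < a < b -> 0 < band_value 0 a b ->
  exists l, 0 < l /\ band_value l a b = 0.
Proof.
  intros Hab Hpos.
  assert (HM : cum_speed a < cum_speed b).
  { apply (lt_of_pos_derive cum_speed m); [lra| |].
    - intros t Ht. apply cum_speed_derive. lra.
    - intros t Ht. apply speed_dens_pos. lra. }
  exists (band_value 0 a b / (cum_speed b - cum_speed a)). split.
  - apply Rdiv_lt_0_compat; lra.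
  - rewrite (band_value_shift _ 0). field. lra.
Qed.

Lemma band_value_negative_level (al be : R) : c1 < c2 -> 0 < al <= be ->
  exists L0, forall a b, triangle al be a b -> band_value L0 a b < 0.
Proof.
  intros Hc12 Hal.
  destruct (continuity_ab_maj (fun x => h x + c1 * mu x) al be) as [xmax [Hxmax Hx]];
    [lra| |].
  { intros x Hx. apply continuity_pt_filterlim, (continuous_Rplus h (fun t => c1 * mu t));
      [apply h_cont; lra|].
    apply (continuous_Rmult (fun _ => c1) mu); [apply continuous_Rconst | apply mu_cont; lra]. }
  exists (h xmax + c1 * mu xmax). intros a b [Ha [Hab Hb]].
  assert (Hdec : band_value (h xmax + c1 * mu xmax) a b <= band_value (h xmax + c1 * mu xmax) a a).
  { apply (le_of_nonpos_derive _ (fun t => m t * (h t + c1 * mu t - (h xmax + c1 * mu xmax))));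
      [exact Hab| |].
    - intros t Ht. apply band_value_derive_right. lra.
    - intros t Ht. assert (0 < m t) by (apply speed_dens_pos; lra).
      assert (h t + c1 * mu t <= h xmax + c1 * mu xmax) by (apply Hxmax; lra). nra. }
  rewrite band_value_diag in Hdec. assert (0 < inv_scale a) by apply inv_scale_pos. nra.
Qed.

Definition band_max (l al be a b : R) : Prop :=
  triangle al be a b /\
  forall a' b', triangle al be a' b' -> band_value l a' b' <= band_value l a b.

Lemma band_max_attained (l al be : R) : 0 < al <= be -> exists a b, band_max l al be a b.
Proof.
  intros Hal.
  set (P := fun b => 1 * cum_reward b + (- l) * cum_speed b + (c1 / 2) * inv_scale b + 0).
  set (g := fun a => (-1) * cum_reward a + l * cum_speed a + (- c2 / 2) * inv_scale a + 0).
  assert (Hcont : forall (p q r : R) x, 0 < x -> continuity_pt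
            (fun t => p * cum_reward t + q * cum_speed t + r * inv_scale t + 0) x).
  { intros p q r x Hx. apply continuity_pt_filterlim.
    apply (ex_derive_continuous
             (fun t => p * cum_reward t + q * cum_speed t + r * inv_scale t + 0)).
    eexists. apply is_derive_affine3;
      [apply cum_reward_derive | apply cum_speed_derive | apply inv_scale_derive]; exact Hx. }
  destruct (max_on_triangle P g al be) as [a [b [Tab Hmax]]]; [lra| | |].
  - intros x Hx. apply Hcont. lra.
  - intros x Hx. apply Hcont. lra.
  - exists a, b. split; [exact Tab|]. intros a' b' Tab'.
    specialize (Hmax a' b' Tab'). unfold P, g in Hmax. unfold band_value. lra.
Qed.

(* Left of al0 buying is strictly profitable (h + c2 mu < l), so a maximising band
   with a < b does not start there. *)
Lemma band_max_left_end (l al be al0 a b : R) :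
  0 < al -> al <= al0 -> a < b -> band_max l al be a b ->
  (forall x, 0 < x <= al0 -> h x + c2 * mu x < l) -> al0 <= a.
Proof.
  intros Hal Hal0 Hab [[Ha [_ Hb]] Hmax] Hleft. apply Rnot_lt_le. intros Hlt.
  set (a' := Rmin al0 b).
  assert (Ha' : a < a' /\ a' <= al0 /\ a' <= b)
    by (unfold a', Rmin; destruct Rle_dec; lra).
  assert (band_value l a b < band_value l a' b).
  { apply (lt_of_pos_derive (fun t => band_value l t b) (fun t => m t * (l - h t - c2 * mu t)));
      [lra| |].
    - intros t Ht. apply band_value_derive_left. lra.
    - intros t Ht. assert (0 < m t) by (apply speed_dens_pos; lra).
      assert (h t + c2 * mu t < l) by (apply Hleft; lra). nra. }
  assert (band_value l a' b <= band_value l a b) by (apply Hmax; unfold triangle; lra).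
  lra.
Qed.

(* Right of be0 selling is strictly unprofitable (h + c1 mu < l), so a maximising
   band with a < b does not end there. *)
Lemma band_max_right_end (l al be be0 a b : R) :
  0 < al -> be0 <= be -> a < b -> band_max l al be a b ->
  (forall x, be0 <= x -> h x + c1 * mu x < l) -> b <= be0.
Proof.
  intros Hal Hbe0 Hab [[Ha [_ Hb]] Hmax] Hright. apply Rnot_lt_le. intros Hlt.
  set (b' := Rmax be0 a).
  assert (Hb' : b' < b /\ be0 <= b' /\ a <= b')
    by (unfold b', Rmax; destruct Rle_dec; lra).
  assert (band_value l a b < band_value l a b').
  { apply (gt_of_neg_derive (fun t => band_value l a t) (fun t => m t * (h t + c1 * mu t - l)));
      [lra| |].
    - intros t Ht. apply band_value_derive_right. lra.
    - intros t Ht. assert (0 < m t) by (apply speed_dens_pos; lra).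
      assert (h t + c1 * mu t < l) by (apply Hright; lra). nra. }
  assert (band_value l a b' <= band_value l a b) by (apply Hmax; unfold triangle; lra).
  lra.
Qed.

Lemma band_max_foc_left (l al be a b : R) :
  0 < al -> al < a -> a < b -> band_max l al be a b -> h a + c2 * mu a = l.
Proof.
  intros Hal Hala Hab [[_ [_ Hb]] Hmax].
  assert (Hfoc : m a * (l - h a - c2 * mu a) = 0).
  { apply (derive_zero_at_max (fun t => band_value l t b) al b a); [lra | lra | |].
    - apply band_value_derive_left. lra.
    - intros x Hx1 Hx2. apply Hmax. unfold triangle. lra. }
  assert (0 < m a) by (apply speed_dens_pos; lra).
  destruct (Rmult_integral _ _ Hfoc); lra.
Qed.

Lemma band_max_foc_right (l al be a b : R) :
  0 < al -> a < b -> b < be -> band_max l al be a b -> h b + c1 * mu b = l.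
Proof.
  intros Hal Hab Hbbe [[Ha _] Hmax].
  assert (Hfoc : m b * (h b + c1 * mu b - l) = 0).
  { apply (derive_zero_at_max (fun t => band_value l a t) a be b); [lra | lra | |].
    - apply band_value_derive_right. lra.
    - intros x Hx1 Hx2. apply Hmax. unfold triangle. lra. }
  assert (0 < m b) by (apply speed_dens_pos; lra).
  destruct (Rmult_integral _ _ Hfoc); lra.
Qed.

(* The profile of the band started at a at level l,
     W x = c1 - 2 s(x) Psi l a x,
   solves the first-order equation sigma^2 / 2 W' + mu W + h = l; it equals c2 at a
   and lies in [c1, c2] wherever the band value conditions hold. *)
Definition band_profile (l a x : R) : R := c1 - 2 * band_value l a x / inv_scale x.

Lemma band_profile_left (l a : R) : band_profile l a a = c2.
Proof.
  unfold band_profile. rewrite band_value_diag. field. apply Rgt_not_eq, inv_scale_pos.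
Qed.

Lemma band_profile_right (l a b : R) : band_value l a b = 0 -> band_profile l a b = c1.
Proof.
  intros Hzero. unfold band_profile. rewrite Hzero. field. apply Rgt_not_eq, inv_scale_pos.
Qed.

Lemma band_profile_bounds (l a b x : R) :
  band_value l a b = 0 -> band_value l a x <= 0 -> band_value l x b <= 0 ->
  c1 <= band_profile l a x <= c2.
Proof.
  intros Hab Hax Hxb. rewrite (band_value_split l a x b), Hab in Hxb.
  assert (HE := inv_scale_pos x).
  set (y := band_value l a x / inv_scale x).
  assert (Hy : band_value l a x = y * inv_scale x) by (unfold y; field; lra).
  unfold band_profile.
  replace (c1 - 2 * band_value l a x / inv_scale x) with (c1 - 2 * y) by (unfold y; field; lra).
  rewrite Hy in Hax, Hxb. split; nra.
Qed.

Lemma band_profile_derive (l a x : R) : 0 < x ->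
  is_derive (band_profile l a) x (2 * (l - h x - mu x * band_profile l a x) / sigma x ^ 2).
Proof.
  intros Hx. assert (HE := inv_scale_pos x). assert (Hs := sigma_pos x Hx).
  assert (Hquot : is_derive (fun t => band_value l a t * / inv_scale t) x
            (m x * (h x + c1 * mu x - l) * / inv_scale x
             + band_value l a x * (- (2 * mu x * m x) / inv_scale x ^ 2))).
  { apply (is_derive_mult (fun t => band_value l a t) (fun t => / inv_scale t)).
    - apply band_value_derive_right, Hx.
    - apply is_derive_inv; [apply inv_scale_derive, Hx | lra].
    - intros; apply Rmult_comm. }
  apply (is_derive_ext (fun t => c1 + (-2) * (band_value l a t * / inv_scale t))).
  { intros t. unfold band_profile, Rdiv. lra. }
  replace (2 * (l - h x - mu x * band_profile l a x) / sigma x ^ 2)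
    with (0 + (-2) * (m x * (h x + c1 * mu x - l) * / inv_scale x
                      + band_value l a x * (- (2 * mu x * m x) / inv_scale x ^ 2))).
  - apply (is_derive_plus (fun _ => c1) (fun t => (-2) * (band_value l a t * / inv_scale t)));
      [exact (is_derive_const c1 x) | apply is_derive_scal, Hquot].
  - rewrite speed_dens_eq. unfold band_profile. field. lra.
Qed.

Lemma band_profile_derive_cont (l a x : R) : 0 < x ->
  continuous (fun t => 2 * (l - h t - mu t * band_profile l a t) / sigma t ^ 2) x.
Proof.
  intros Hx.
  apply continuous_Rdiv; [|apply sigma2_cont, Hx | apply Rgt_not_eq, sigma2_pos, Hx].
  apply (continuous_Rmult (fun _ => 2)); [apply continuous_Rconst|].
  apply (continuous_Rminus (fun t => l - h t)).
  - apply (continuous_Rminus (fun _ => l)); [apply continuous_Rconst | apply h_cont, Hx].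
  - apply continuous_Rmult; [apply mu_cont, Hx|].
    apply (ex_derive_continuous (band_profile l a)). eexists. apply band_profile_derive, Hx.
Qed.

Lemma band_level_zero (al be l1 a0 b0 : R) :
  c1 < c2 -> 0 < al -> triangle al be a0 b0 -> band_value l1 a0 b0 = 0 ->
  exists l a b, l1 <= l /\ band_max l al be a b /\ band_value l a b = 0.
Proof.
  intros Hc12 Hal Tab0 Hl1.
  assert (Hbe : 0 < al <= be) by (destruct Tab0 as [? [? ?]]; lra).
  destruct (band_value_negative_level al be Hc12 Hbe) as [L0 HL0].
  destruct (zero_level_of_max (fun l p => band_value l (fst p) (snd p))
              (fun p => cum_speed (snd p) - cum_speed (fst p))
              (fun p => triangle al be (fst p) (snd p))
              (cum_speed be - cum_speed al) l1 L0 (a0, b0))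
    as [l [[a b] [Hl [Tab [Hzero Hle0]]]]]; simpl in *.
  - intros l l' [a b]. apply band_value_shift.
  - intros [a b] [Ha [Hab Hb]]. simpl in *.
    assert (cum_speed al <= cum_speed a) by (apply cum_speed_mono; lra).
    assert (cum_speed a <= cum_speed b) by (apply cum_speed_mono; lra).
    assert (cum_speed b <= cum_speed be) by (apply cum_speed_mono; lra).
    lra.
  - exact Tab0.
  - rewrite Hl1. lra.
  - intros [a b] Tab. apply HL0, Tab.
  - intros l. destruct (band_max_attained l al be Hbe) as [a [b [Tab Hmax]]].
    exists (a, b). split; [exact Tab|]. intros [a' b'] Tab'. apply Hmax, Tab'.
  - exists l, a, b. split; [exact Hl|]. split; [|exact Hzero].
    split; [exact Tab|]. intros a' b' Tab'. rewrite Hzero. apply (Hle0 (a', b')), Tab'.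
Qed.

(* At the level l of band_level_zero a maximising
   band (a, b) has value 0, lies in the interior of the triangle by the boundary
   behaviour of h + c2 mu at 0 and of h + c1 mu at oo, and so satisfies the
   first-order conditions at both ends. *)
Lemma optimal_band (a0 b0 : R) (L : Rbar) :
  c1 < c2 ->
  continuous (fun x => h x + c2 * mu x) 0 -> h 0 + c2 * mu 0 <= 0 ->
  is_lim (fun x => h x + c1 * mu x) p_infty L -> Rbar_lt L 0 ->
  0 < a0 < b0 -> 0 < band_value 0 a0 b0 ->
  exists l a b, 0 < l /\ 0 < a /\ a < b /\ band_value l a b = 0 /\
    (forall x, a <= x <= b -> band_value l a x <= 0 /\ band_value l x b <= 0) /\
    h a + c2 * mu a = l /\ h b + c1 * mu b = l.
Proof.
  intros Hc12 Hcont0 H0 Hlim HL Hab0 Hpos.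
  destruct (band_level_positive a0 b0 Hab0 Hpos) as [l1 [Hl1 Hl1zero]].
  destruct (below_near_zero _ l1 a0 Hcont0 ltac:(lra) ltac:(lra)) as [al0 [Hal0 Hleft]].
  destruct (eventually_negative _ L b0 Hlim HL) as [be0 [Hbe0 Hright]].
  destruct (band_level_zero (al0 / 2) (be0 + 1) l1 a0 b0 Hc12)
    as [l [a [b [Hl [Hmax Hzero]]]]]; [lra | unfold triangle; lra | exact Hl1zero|].
  assert (Hsigns := proj2 Hmax). destruct (proj1 Hmax) as [Ha [Hab Hb]].
  assert (Hlt : a < b).
  { destruct (Req_dec a b) as [<-|]; [|lra]. rewrite band_value_diag in Hzero.
    assert (0 < inv_scale a) by apply inv_scale_pos. nra. }
  assert (Hal0a : al0 <= a).
  { apply (band_max_left_end l (al0 / 2) (be0 + 1) al0 a b); try lra; [exact Hmax|].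
    intros x Hx. specialize (Hleft x ltac:(lra)). lra. }
  assert (Hbbe0 : b <= be0).
  { apply (band_max_right_end l (al0 / 2) (be0 + 1) be0 a b); try lra; [exact Hmax|].
    intros x Hx. specialize (Hright x Hx). lra. }
  exists l, a, b. rewrite Hzero in Hsigns. repeat split; try lra.
  - apply Hsigns. unfold triangle. lra.
  - apply Hsigns. unfold triangle. lra.
  - apply (band_max_foc_left l (al0 / 2) (be0 + 1) a b); try lra. exact Hmax.
  - apply (band_max_foc_right l (al0 / 2) (be0 + 1) a b); try lra. exact Hmax.
Qed.

Lemma band_profile_extension (l a b : R) :
  0 < a < b -> band_value l a b = 0 -> h a + c2 * mu a = l -> h b + c1 * mu b = l ->
  exists w : R -> R,
    (forall x, ex_derive w x /\ continuous (Derive w) x) /\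
    (forall x, a <= x <= b ->
       w x = band_profile l a x /\ / 2 * sigma x ^ 2 * Derive w x + mu x * w x + h x = l) /\
    (forall x, x <= a -> w x = c2 /\ Derive w x = 0) /\
    (forall x, b <= x -> w x = c1 /\ Derive w x = 0).
Proof.
  intros Hab Hzero Hfoc_a Hfoc_b.
  set (W' := fun x => 2 * (l - h x - mu x * band_profile l a x) / sigma x ^ 2).
  assert (Hsig : forall x, 0 < x -> sigma x <> 0)
    by (intros x Hx; apply Rgt_not_eq, sigma_pos, Hx).
  destruct (C1_constant_extension (band_profile l a) W' a b) as [w [Hw [Hmid [Hlow Hhigh]]]];
    [lra | | | |].
  - intros x Hx. split; [apply band_profile_derive | apply band_profile_derive_cont]; lra.
  - unfold W'. rewrite band_profile_left, <- Hfoc_a. field. apply Hsig; lra.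
  - unfold W'. rewrite band_profile_right, <- Hfoc_b by exact Hzero. field. apply Hsig; lra.
  - exists w. split; [exact Hw|]. split; [|split].
    + intros x Hx. destruct (Hmid x Hx) as [-> ->]. split; [reflexivity|].
      unfold W'. field. apply Hsig; lra.
    + intros x Hx. rewrite <- (band_profile_left l a). apply Hlow, Hx.
    + intros x Hx. rewrite <- (band_profile_right l a b Hzero). apply Hhigh, Hx.
Qed.

End BandFunctional.

(* Lemma 4.9: the optimal band gives a_star, b_star and l0, and the smooth-fit
   extension of its profile is w0; its range follows from maximality of the band. *)
Theorem lemma4p9 (mu sigma h : R -> R) (c1 c2 : R) (V : R -> R -> R) :
  standing_setup mu sigma ->
  0 < c1 -> c1 < c2 ->
  (forall x, 0 <= x -> 0 <= h x) ->
  (forall x, 0 <= x -> continuous h x) ->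
  assumption_3_2 mu sigma h c1 c2 ->
  assumption_4_2 mu sigma h c1 c2 V ->
  assumption_4_3 mu sigma h ->
  exists astar bstar l0 : R, exists w0 : R -> R,
    0 < astar /\ astar < bstar /\ 0 < l0 /\ C1_pos w0 /\
    (forall x, astar < x < bstar ->
       / 2 * sigma x ^ 2 * Derive w0 x + mu x * w0 x + h x = l0 /\
       c1 <= w0 x <= c2) /\
    (forall x, 0 < x <= astar -> w0 x = c2 /\ Derive w0 x = 0) /\
    (forall x, bstar <= x -> w0 x = c1 /\ Derive w0 x = 0).
Proof.
  intros [mu_c [sigma_c [sigma_p _]]] _ Hc12 _ h_c
         [H0 [[L [Hlim HL]] [a0 [b0 [Hab0 Hpos]]]]] _ _.
  assert (mu_c' : forall x, 0 < x -> continuous mu x) by (intros x Hx; apply mu_c; lra).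
  assert (sigma_c' : forall x, 0 < x -> continuous sigma x) by (intros x Hx; apply sigma_c; lra).
  assert (h_c' : forall x, 0 < x -> continuous h x) by (intros x Hx; apply h_c; lra).
  assert (Hcont0 : continuous (fun x => h x + c2 * mu x) 0).
  { apply (continuous_Rplus h (fun x => c2 * mu x)); [apply h_c; lra|].
    apply (continuous_Rmult (fun _ => c2) mu); [apply continuous_Rconst | apply mu_c; lra]. }
  rewrite (band_value_level0 mu sigma h c1 c2 mu_c' sigma_c' h_c' sigma_p) in Hpos by lra.
  destruct (optimal_band mu sigma h c1 c2 mu_c' sigma_c' h_c' sigma_p a0 b0 L Hc12 Hcont0 H0
              Hlim HL Hab0 Hpos)
    as [l [a [b [Hl [Ha [Hab [Hzero [Hsigns [Hfoc_a Hfoc_b]]]]]]]]].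
  destruct (band_profile_extension mu sigma h c1 c2 mu_c' sigma_c' h_c' sigma_p l a b
              (conj Ha Hab) Hzero Hfoc_a Hfoc_b) as [w [Hw [Hmid [Hlow Hhigh]]]].
  exists a, b, l, w. split; [lra|]. split; [lra|]. split; [lra|].
  split; [intros x _; apply Hw|]. split; [|split].
  - intros x Hx. destruct (Hmid x ltac:(lra)) as [Hwx Hode]. split; [exact Hode|].
    rewrite Hwx. destruct (Hsigns x ltac:(lra)).
    apply (band_profile_bounds mu sigma h c1 c2 l a b); assumption.
  - intros x Hx. apply Hlow. lra.
  - exact Hhigh.
Qed.
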